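(* Let $X$ be a Banach space and $k\in\mathbb{N}$. Every bounded $k$-sequence $(x_s)_{s\in[\mathbb{N}]^k}$ in $X$ (i.e. $\sup_s\|x_s\|<\infty$) admits a $k$-spreading model: there exist an infinite $M\subseteq\mathbb{N}$ and a seminorm $\|\cdot\|_*$ on $c_{00}(\mathbb{N})$ such that $(x_s)_{s\in[M]^k}$ generates the natural Hamel basis $(e_n)_n$ of $(c_{00}(\mathbb{N}),\|\cdot\|_* )$ as a $k$-spreading model.
   Context: $[M]^k$ denotes the $k$-element subsets of $M\subseteq\mathbb{N}$, each $s$ identified with its increasing enumeration $s(1)<\dots<s(k)$; $M(n)$ denotes the $n$-th element of $M$. A $k$-sequence in $X$ is a map $[\mathbb{N}]^k\to X$, written $(x_s)_{s\in[\mathbb{N}]^k}$; its restriction to $[M]^k$ is written $(x_s)_{s\in[M]^k}$. A finite sequence $(s_j)_{j=1}^l$ in $[M]^k$ is a plegma family if $s_1(i)<\dots<s_l(i)$ for every $1\le i\le k$ and $s_l(i)<s_1(i+1)$ for every $1\le i<k$; $\mathrm{Plm}_l([M]^k)$ is the set of such families of length $l$. Given an infinite-dimensional seminormed space $(E,\|\cdot\|_* )$ with Hamel basis $(e_n)_n$, we say $(x_s)_{s\in[M]^k}$ generates $(e_n)_n$ as a $k$-spreading model if there is a null sequence $(\delta_n)$ of positive reals such that for all $m\le l$, all $(s_j)_{j=1}^m\in\mathrm{Plm}_m([M]^k)$ with $s_1(1)\ge M(l)$ and all $a_1,\dots,a_m\in[-1,1]$: $\big|\|\sum_{j=1}^m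 a_jx_{s_j}\|-\|\sum_{j=1}^m a_je_j\|_*\big|\le\delta_l$. A $k$-sequence admits $(e_n)$ as a $k$-spreading model if some $(x_s)_{s\in[M]^k}$ generates it. *)

From Stdlib Require Import Reals Lra List.
Import ListNotations.
Open Scope R_scope.

Record Banach := {
  carrier :> Type;
  vzero : carrier;
  vadd : carrier -> carrier -> carrier;
  vopp : carrier -> carrier;
  vscal : R -> carrier -> carrier;
  vnorm : carrier -> R;
  vadd_assoc : forall x y z, vadd x (vadd y z) = vadd (vadd x y) z;
  vadd_comm : forall x y, vadd x y = vadd y x;
  vadd_0 : forall x, vadd x vzero = x;
  vadd_opp : forall x, vadd x (vopp x) = vzero;
  vscal_1 : forall x, vscal 1 x = x;
  vscal_assoc : forall a b x, vscal a (vscal b x) = vscal (a * b) x;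
  vscal_distr_l : forall a x y, vscal a (vadd x y) = vadd (vscal a x) (vscal a y);
  vscal_distr_r : forall a b x, vscal (a + b) x = vadd (vscal a x) (vscal b x);
  vnorm_eq0 : forall x, vnorm x = 0 -> x = vzero;
  vnorm_scal : forall a x, vnorm (vscal a x) = Rabs a * vnorm x;
  vnorm_triangle : forall x y, vnorm (vadd x y) <= vnorm x + vnorm y;
  vcomplete : forall u : nat -> carrier,
    (forall eps, 0 < eps -> exists N, forall n m, (N <= n)%nat -> (N <= m)%nat ->
        vnorm (vadd (u n) (vopp (u m))) < eps) ->
    exists l, forall eps, 0 < eps -> exists N, forall n, (N <= n)%nat ->
        vnorm (vadd (u n) (vopp l)) < eps
}.

Fixpoint vsum (X : Banach) (n : nat) (f : nat -> X) : X :=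
  match n with
  | O => vzero X
  | S n' => vadd X (vsum X n' f) (f n')
  end.

(** Infinite subsets of N are represented by their strictly increasing
    enumeration M : nat -> nat; the paper's M(n) (n >= 1) is [M (n-1)]. *)
Definition strict_incr (M : nat -> nat) : Prop := forall n, (M n < M (S n))%nat.

(** An element s of [M]^k: a list of length k, strictly increasing
    (s(i+1) in the paper is [nth i s 0]), with all entries in M. *)
Definition in_subsets (M : nat -> nat) (k : nat) (s : list nat) : Prop :=
  length s = k /\
  (forall i, (S i < k)%nat -> (nth i  s 0%nat < nth (S i) s 0%nat)%nat) /\
  (forall i, (i < k)%nat -> exists n, nth i  s 0%nat = M n).

Definition in_Nk (k : nat) (s : list nat) : Prop := in_subsets (fun n => n) k s.

(** (s_j)_{j=1}^l (here s 0, ..., s (l-1)) is a plegma family in [M]^k. *)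
Definition plegma (M : nat -> nat) (k l : nat) (s : nat -> list nat) : Prop :=
  (forall j, (j < l)%nat -> in_subsets M k (s j)) /\
  (forall i j, (i < k)%nat -> (S j < l)%nat ->
     (nth i (s j) 0%nat < nth i (s (S j)) 0%nat)%nat) /\
  (forall i, (S i < k)%nat -> (0 < l)%nat ->
     (nth i (s (l - 1)%nat) 0%nat < nth (S i) (s 0%nat) 0%nat)%nat).

(** c00(N) = finitely supported real sequences; e_n is the n-th unit vector
    (0-indexed: paper's e_j is our index j-1). *)
Definition c00 (f : nat -> R) : Prop :=
  exists N, forall n, (N <= n)%nat -> f n = 0.

Definition seminorm_c00 (N : (nat -> R) -> R) : Prop :=
  (forall f, c00 f -> 0 <= N f) /\
  (forall a f, c00 f -> N (fun n => a * f n) = Rabs a * N f) /\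
  (forall f g, c00 f -> c00 g -> N (fun n => f n + g n) <= N f + N g).

(** sum_{j=1}^m a_j e_j in c00, with a_j = a (j-1). *)
Definition c00_comb (m : nat) (a : nat -> R) : nat -> R :=
  fun n => if Nat.ltb n m then a n else 0.

Definition generates_spreading_model (X : Banach) (k : nat)
    (x : list nat -> X) (M : nat -> nat) (N : (nat -> R) -> R) : Prop :=
  exists delta : nat -> R,
    (forall n, 0 < delta n) /\ Un_cv delta 0 /\
    forall (l m : nat) (s : nat -> list nat) (a : nat -> R),
      (1 <= l)%nat -> (m <= l)%nat ->
      plegma M k m s ->
      (0 < m -> M (l - 1)%nat <= nth 0 (s 0%nat) 0%nat)%nat ->
      (forall j, (j < m)%nat -> -1 <= a j <= 1) ->
      Rabs (vnorm X (vsum X m (fun j => vscal X (a j) (x (s j))))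
            - N (c00_comb m a)) <= delta l.

(** The proof is a Ramsey-theoretic diagonal argument, in the spirit of
    Brunel and Sucheston's construction of classical spreading models.

    - For a fixed number m of vectors and fixed coefficients, the quantity
      ||sum_{j<m} a_j x_{s_j}|| over plegma families (s_j) in [M]^k is a
      bounded function of the single (m*k)-subset obtained by interleaving
      the s_j.  Ramsey's theorem for finite colourings of [M]^n therefore
      yields a subsequence on which it oscillates by at most eps.
    - Doing this simultaneously for all m <= p+1 and all coefficient vectors
      on a finite grid of mesh 1/(p+1)^2 in [-(p+1), p+1], and using that the
      norm is Lipschitz in the coefficients, gives a subsequence on which all
      these quantities oscillate by at most K/(p+1), K = 2 C + 1.
    - A diagonal sequence D through these nested subsequences is uniformly
      stable: the oscillation at level p is K/(p+1) once the families start
      beyond D(p).  Along canonical plegma families in D, the norms form a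
      Cauchy sequence; their limit is the seminorm on c00, and the stability
      estimate is exactly the spreading-model inequality with delta_l = K/l. *)

From Stdlib Require Import Reals List.
From Stdlib Require Import Lra Lia ZArith Sorted ClassicalEpsilon Classical FunctionalExtensionality.
Import ListNotations.
Open Scope R_scope.

Section NormedSpaceFacts.
Variable X : Banach.

Lemma vadd_idem_zero (y : X) : vadd X y y = y -> y = vzero X.
Proof.
  intro H. transitivity (vadd X (vadd X y y) (vopp X y)).
  - rewrite <- vadd_assoc, vadd_opp, vadd_0. reflexivity.
  - rewrite H. apply vadd_opp.
Qed.

Lemma vscal_0l (x : X) : vscal X 0 x = vzero X.
Proof. apply vadd_idem_zero. rewrite <- vscal_distr_r. f_equal. ring. Qed.

Lemma vscal_0r (a : R) : vscal X a (vzero X) = vzero X.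
Proof. rewrite <- (vscal_0l (vzero X)), vscal_assoc. f_equal. ring. Qed.

Lemma vnorm_zero : vnorm X (vzero X) = 0.
Proof. rewrite <- (vscal_0l (vzero X)), vnorm_scal, Rabs_R0. ring. Qed.

(** Nonnegativity follows from [0 = ||x - x|| <= 2 ||x||]. *)
Lemma vnorm_nonneg (x : X) : 0 <= vnorm X x.
Proof.
  assert (H := vnorm_triangle X x (vscal X (-1) x)).
  rewrite <- (vscal_1 X x) in H at 1.
  rewrite <- vscal_distr_r in H.
  replace (1 + -1) with 0 in H by ring.
  rewrite vscal_0l, vnorm_zero, vnorm_scal in H.
  replace (Rabs (-1)) with 1 in H by (rewrite Rabs_left; lra). lra.
Qed.

Lemma vsum_ext n (f g : nat -> X) :
  (forall j, (j < n)%nat -> f j = g j) -> vsum X n f = vsum X n g.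
Proof.
  induction n; simpl; intros H; auto.
  rewrite IHn by (intros; apply H; lia). rewrite H by lia. reflexivity.
Qed.

Lemma vsum_scal n a (f : nat -> X) :
  vscal X a (vsum X n f) = vsum X n (fun j => vscal X a (f j)).
Proof.
  induction n; simpl; [apply vscal_0r|].
  rewrite vscal_distr_l, IHn. reflexivity.
Qed.

Lemma vsum_add n (f g : nat -> X) :
  vsum X n (fun j => vadd X (f j) (g j)) = vadd X (vsum X n f) (vsum X n g).
Proof.
  induction n; simpl; [rewrite vadd_0; reflexivity|].
  rewrite IHn, !vadd_assoc. f_equal.
  rewrite <- !vadd_assoc. f_equal. apply vadd_comm.
Qed.

Lemma vsum_zero_tail m p (f : nat -> X) :
  (forall j, (m <= j)%nat -> f j = vzero X) -> (m <= p)%nat -> vsum X p f = vsum X m f.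
Proof.
  intros H Hmp. induction Hmp; auto. simpl. rewrite H by lia. rewrite vadd_0. auto.
Qed.

Lemma vsum_norm_le n (f : nat -> X) e :
  (forall j, (j < n)%nat -> vnorm X (f j) <= e) -> vnorm X (vsum X n f) <= INR n * e.
Proof.
  induction n; intros H; cbn [vsum]; [rewrite vnorm_zero; simpl; lra|].
  eapply Rle_trans; [apply vnorm_triangle|].
  assert (IH : vnorm X (vsum X n f) <= INR n * e) by (apply IHn; intros; apply H; lia).
  assert (Hn := H n (Nat.lt_succ_diag_r n)).
  rewrite S_INR. lra.
Qed.

End NormedSpaceFacts.

Definition comb_norm (X : Banach) (x : list nat -> X) (m : nat) (a : nat -> R)
    (s : nat -> list nat) : R :=
  vnorm X (vsum X m (fun j => vscal X (a j) (x (s j)))).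

Section CombNorm.
Variables (X : Banach) (x : list nat -> X).

Lemma comb_norm_ext m a b s s' :
  (forall j, (j < m)%nat -> a j = b j /\ s j = s' j) -> comb_norm X x m a s = comb_norm X x m b s'.
Proof.
  intros H. unfold comb_norm. f_equal. apply vsum_ext.
  intros j Hj. destruct (H j Hj) as [-> ->]. auto.
Qed.

Lemma comb_norm_tail m p a s :
  (forall j, (m <= j)%nat -> a j = 0) -> (m <= p)%nat -> comb_norm X x p a s = comb_norm X x m a s.
Proof.
  intros H Hmp. unfold comb_norm. f_equal. apply vsum_zero_tail; auto.
  intros j Hj. rewrite H by auto. apply vscal_0l.
Qed.

Lemma comb_norm_scal m c f s :
  comb_norm X x m (fun n => c * f n) s = Rabs c * comb_norm X x m f s.
Proof.
  unfold comb_norm. rewrite <- vnorm_scal, vsum_scal. f_equal. apply vsum_ext.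
  intros. rewrite vscal_assoc. auto.
Qed.

Lemma comb_norm_subadd m f g s :
  comb_norm X x m (fun n => f n + g n) s <= comb_norm X x m f s + comb_norm X x m g s.
Proof.
  unfold comb_norm. eapply Rle_trans; [|apply vnorm_triangle]. right. f_equal.
  rewrite <- vsum_add. apply vsum_ext. intros. apply vscal_distr_r.
Qed.

Lemma comb_norm_perturb m a b s e C :
  (forall j, (j < m)%nat -> Rabs (a j - b j) <= e) ->
  (forall j, (j < m)%nat -> vnorm X (x (s j)) <= C) ->
  comb_norm X x m a s <= comb_norm X x m b s + INR m * (e * C).
Proof.
  intros Hab Hx. unfold comb_norm.
  replace (vsum X m (fun j => vscal X (a j) (x (s j)))) with
    (vadd X (vsum X m (fun j => vscal X (b j) (x (s j))))
            (vsum X m (fun j => vscal X (a j - b j) (x (s j))))).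
  2:{ rewrite <- vsum_add. apply vsum_ext. intros.
      rewrite <- vscal_distr_r. f_equal. ring. }
  eapply Rle_trans; [apply vnorm_triangle|]. apply Rplus_le_compat_l.
  apply vsum_norm_le. intros j Hj. rewrite vnorm_scal.
  apply Rmult_le_compat; auto using Rabs_pos, vnorm_nonneg.
Qed.

Lemma comb_norm_lipschitz m a b s e C :
  (forall j, (j < m)%nat -> Rabs (a j - b j) <= e) ->
  (forall j, (j < m)%nat -> vnorm X (x (s j)) <= C) ->
  Rabs (comb_norm X x m a s - comb_norm X x m b s) <= INR m * (e * C).
Proof.
  intros Hab Hx.
  assert (H1 := comb_norm_perturb m a b s e C Hab Hx).
  assert (H2 := comb_norm_perturb m b a s e C
                  ltac:(intros j Hj; rewrite Rabs_minus_sym; auto) Hx).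
  apply Rabs_le. lra.
Qed.

End CombNorm.

(** ** Subsequences and Ramsey's theorem *)

Definition subsequence (M' M : nat -> nat) : Prop :=
  strict_incr M' /\ forall n, exists i, M' n = M i.

Definition finite_subset (M : nat -> nat) (n : nat) (t : list nat) : Prop :=
  length t = n /\ StronglySorted lt t /\ forall y, In y t -> exists i, y = M i.

Section StrictlyIncreasing.
Variable M : nat -> nat.
Hypothesis HM : strict_incr M.

Lemma strict_incr_lt i j : (i < j)%nat -> (M i < M j)%nat.
Proof. intros Hij. induction Hij; [apply HM|]. specialize (HM m). lia. Qed.

Lemma strict_incr_le i j : (i <= j)%nat -> (M i <= M j)%nat.
Proof.
  intros Hij. destruct (Nat.eq_dec i j); [subst; lia|].
  assert (M i < M j)%nat by (apply strict_incr_lt; lia). lia.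
Qed.

Lemma strict_incr_lt_inv i j : (M i < M j)%nat -> (i < j)%nat.
Proof.
  intros Hij. destruct (Nat.lt_ge_cases i j); auto.
  assert (M j <= M i)%nat by (apply strict_incr_le; auto). lia.
Qed.

Lemma strict_incr_le_inv i j : (M i <= M j)%nat -> (i <= j)%nat.
Proof.
  intros Hij. destruct (Nat.le_gt_cases i j); auto.
  assert (M j < M i)%nat by (apply strict_incr_lt; auto). lia.
Qed.

Lemma subsequence_ge M' n : subsequence M' M -> (M n <= M' n)%nat.
Proof.
  intros [HM' Hr]. induction n.
  - destruct (Hr 0%nat) as [i ->]. apply strict_incr_le; lia.
  - destruct (Hr (S n)) as [i Hi]. assert (H1 := HM' n).
    assert (n < i)%nat by (apply strict_incr_lt_inv; lia).
    rewrite Hi. apply strict_incr_le; auto.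
Qed.

Lemma subsequence_refl : subsequence M M.
Proof. split; auto. intros n; exists n; auto. Qed.

End StrictlyIncreasing.

Lemma subsequence_trans M1 M2 M3 : subsequence M1 M2 -> subsequence M2 M3 -> subsequence M1 M3.
Proof.
  intros [H1 R1] [H2 R2]. split; auto. intros n. destruct (R1 n) as [i Hi].
  destruct (R2 i) as [j Hj]. exists j. congruence.
Qed.

Lemma finite_subset_mono M' M n t :
  (forall j, exists i, M' j = M i) -> finite_subset M' n t -> finite_subset M n t.
Proof.
  intros Hr [H1 [H2 H3]]. repeat split; auto.
  intros y Hy. destruct (H3 y Hy) as [j ->]. apply Hr.
Qed.

Lemma infinitely_often_subsequence (P : nat -> Prop) :
  (forall N, exists i, (N <= i)%nat /\ P i) ->
  exists psi, strict_incr psi /\ forall j, P (psi j).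
Proof.
  intros H.
  assert (G : forall N, {i | (N <= i)%nat /\ P i})
    by (intros N; apply constructive_indefinite_description, H).
  pose (psi := nat_rect (fun _ => nat) (proj1_sig (G 0%nat))
                 (fun _ p => proj1_sig (G (S p)))).
  exists psi. split.
  - intros n. cbn. destruct (proj2_sig (G (S (psi n)))) as [Hi _]. lia.
  - intros [|j]; [apply (proj2_sig (G 0%nat))|apply (proj2_sig (G (S (psi j))))].
Qed.

Lemma recurrent_colour K (col : nat -> nat) N :
  (forall i, (N <= i)%nat -> (col i < K)%nat) ->
  exists kap, forall N', exists i, (N' <= i)%nat /\ col i = kap.
Proof.
  revert N. induction K; intros N H; [specialize (H N (le_n N)); lia|].
  destruct (classic (forall N', exists i, (N' <= i)%nat /\ col i = K)) as [Hy|Hn]; eauto.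
  apply not_all_ex_not in Hn. destruct Hn as [N' HN'].
  apply (IHK (Nat.max N N')). intros i Hi.
  assert (col i < S K)%nat by (apply H; lia).
  destruct (Nat.eq_dec (col i) K); [|lia].
  exfalso. apply HN'. exists i. split; auto; lia.
Qed.

Lemma pigeonhole K (col : nat -> nat) :
  (forall i, (col i < K)%nat) ->
  exists kap psi, strict_incr psi /\ forall j, col (psi j) = kap.
Proof.
  intros H. destruct (recurrent_colour K col 0 (fun i _ => H i)) as [kap Hk].
  destruct (infinitely_often_subsequence (fun i => col i = kap) Hk) as [psi [H1 H2]].
  exists kap, psi; auto.
Qed.

Definition ramsey_property (n : nat) : Prop :=
  forall K (c : list nat -> nat) M,
    (forall t, (c t < K)%nat) -> strict_incr M ->
    exists M' col, (col < K)%nat /\ subsequence M' M /\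
      forall t, finite_subset M' n t -> c t = col.

Lemma ramsey_0 : ramsey_property 0.
Proof.
  intros K c M HK HM. exists M, (c nil). split; auto. split; [apply subsequence_refl; auto|].
  intros t [Ht _]. destruct t; [auto|discriminate].
Qed.

(** Inductive step, first half: assuming Ramsey for n-subsets, thin out M
    to a sequence a such that the colour of [a_i :: t], for t an n-subset of
    the later terms of a, depends only on i. *)
Lemma ramsey_chain n K (c : list nat -> nat) M :
  ramsey_property n -> (forall t, (c t < K)%nat) -> strict_incr M ->
  exists a col, subsequence a M /\ (forall i, (col i < K)%nat) /\
    forall i t, finite_subset (fun j => a (S i + j)%nat) n t -> c (a i :: t) = col i.
Proof.
  intros IH HK HM.
  assert (Ex : forall hA : nat * (nat -> nat), exists p : (nat -> nat) * nat,
      strict_incr (snd hA) -> (snd p < K)%nat /\ subsequence (fst p) (snd hA) /\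
      forall t, finite_subset (fst p) n t -> c (fst hA :: t) = snd p).
  { intros [h A]. destruct (classic (strict_incr A)) as [HA|HA].
    - destruct (IH K (fun t => c (h :: t)) A (fun t => HK _) HA) as [M' [col H]].
      exists (M', col). auto.
    - exists (A, 0%nat). intros; contradiction. }
  apply choice in Ex. destruct Ex as [G HG].
  (* A_0 = M; A_{i+1} refines the tail of A_i, keyed by its head A_i(0). *)
  pose (A := nat_rect (fun _ => nat -> nat) M
               (fun _ Ai => fst (G (Ai 0%nat, fun m => Ai (S m))))).
  pose (col := fun i => snd (G (A i 0%nat, fun m => A i (S m)))).
  assert (Ainc : forall i, strict_incr (A i) /\
             (col i < K)%nat /\ subsequence (A (S i)) (fun m => A i (S m)) /\
             forall t, finite_subset (A (S i)) n t -> c (A i 0%nat :: t) = col i).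
  { intros i. assert (Hi : strict_incr (A i)).
    { induction i; [exact HM|]. apply (HG (_, _) (fun m => IHi (S m))). }
    split; [exact Hi|]. apply (HG (_, _) (fun m => Hi (S m))). }
  assert (Atail : forall i m, exists m', A (S i) m = A i (S m'))
    by (intros i; destruct (Ainc i) as [_ [_ [[_ Hsub] _]]]; exact Hsub).
  assert (Arange : forall i j, (i <= j)%nat -> forall m, exists m', A j m = A i m').
  { intros i j Hij. induction Hij as [|j Hij IHj]; [eauto|].
    intros m. destruct (Atail j m) as [m' Hm'].
    destruct (IHj (S m')) as [m'' Hm'']. exists m''. congruence. }
  exists (fun i => A i 0%nat), col. split; [split|split].
  - intros i. destruct (Atail i 0%nat) as [m' Hm'].
    rewrite Hm'. apply strict_incr_lt; [apply Ainc|lia].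
  - intros i. apply (Arange 0%nat i (Nat.le_0_l _)).
  - intros i. apply Ainc.
  - intros i t Ht. apply Ainc. eapply finite_subset_mono; [|exact Ht].
    intros j. apply Arange. lia.
Qed.

Lemma ramsey n : ramsey_property n.
Proof.
  induction n as [|n IH]; [exact ramsey_0|].
  intros K c M HK HM.
  destruct (ramsey_chain n K c M IH HK HM) as [a [col [[Ha Hsub] [Hcol Hc]]]].
  destruct (pigeonhole K col Hcol) as [kap [psi [Hpsi Hkap]]].
  exists (fun j => a (psi j)), kap. split; [rewrite <- (Hkap 0%nat); auto|].
  split; [split|].
  - intros j. apply strict_incr_lt; auto.
  - intros j. apply Hsub.
  - intros [|y t] [Hlen [Hss Hin]]; [discriminate|].
    injection Hlen as Hlen. apply StronglySorted_inv in Hss. destruct Hss as [Hss Hfa].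
    destruct (Hin y (or_introl eq_refl)) as [j0 ->].
    rewrite <- (Hkap j0). apply Hc. split; [exact Hlen|split; [exact Hss|]].
    intros z Hz. destruct (Hin z (or_intror Hz)) as [j ->].
    rewrite Forall_forall in Hfa. specialize (Hfa _ Hz).
    assert (psi j0 < psi j)%nat by (apply (strict_incr_lt_inv a); auto).
    exists (psi j - S (psi j0))%nat. f_equal. lia.
Qed.

Lemma up_nonneg y : 0 <= y -> (0 <= up y)%Z.
Proof. intros H. destruct (archimed y) as [H1 _]. apply le_IZR. lra. Qed.

Lemma up_monotone y Y : 0 <= y -> y <= Y -> (Z.to_nat (up y) <= Z.to_nat (up Y))%nat.
Proof.
  intros H0 H. destruct (archimed y) as [H1 H2]. destruct (archimed Y) as [H3 H4].
  apply Z2Nat.inj_le; try (apply up_nonneg; lra).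
  assert (up y < up Y + 1)%Z by (apply lt_IZR; rewrite plus_IZR; simpl; lra).
  lia.
Qed.

Lemma up_eq_close y y' : 0 <= y -> 0 <= y' -> Z.to_nat (up y) = Z.to_nat (up y') -> Rabs (y - y') < 1.
Proof.
  intros H H' E. apply Z2Nat.inj in E; try (apply up_nonneg; auto).
  destruct (archimed y) as [H1 H2]. destruct (archimed y') as [H3 H4].
  rewrite E in *. apply Rabs_def1; lra.
Qed.

(** A function of n-subsets bounded by B oscillates by at most eps on the
    n-subsets of some subsequence: colour t by the eps-cell of f t in
    [-B, B] and apply Ramsey's theorem. *)
Lemma stabilize n (f : list nat -> R) B eps M :
  0 < eps -> strict_incr M -> (forall t, finite_subset M n t -> Rabs (f t) <= B) ->
  exists M', subsequence M' M /\
    forall t t', finite_subset M' n t -> finite_subset M' n t' -> Rabs (f t - f t') <= eps.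
Proof.
  intros He HM HB.
  pose (K := Z.to_nat (up (2 * B / eps))).
  pose (cell := fun t => Z.to_nat (up ((f t + B) / eps))).
  destruct (ramsey n (S K) (fun t => Nat.min (cell t) K) M) as [M' [col [_ [Hsub Hc]]]];
    [intros t; lia|exact HM|].
  exists M'. split; [exact Hsub|]. intros t t' Ht Ht'.
  assert (Hcell : forall u, finite_subset M' n u ->
      0 <= (f u + B) / eps /\ Nat.min (cell u) K = cell u).
  { intros u Hu. assert (Hb := HB u (finite_subset_mono _ _ _ _ (proj2 Hsub) Hu)).
    pose proof (Rle_abs (f u)) as Hpos.
    pose proof (Rle_abs (- f u)) as Hneg. rewrite Rabs_Ropp in Hneg.
    assert (0 <= (f u + B) / eps)
      by (apply Rmult_le_pos; [lra|left; apply Rinv_0_lt_compat; auto]).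
    split; [auto|]. apply Nat.min_l. apply up_monotone; auto.
    apply Rmult_le_compat_r; [left; apply Rinv_0_lt_compat; auto|lra]. }
  destruct (Hcell t Ht) as [Y1 C1]. destruct (Hcell t' Ht') as [Y2 C2].
  assert (Hl := up_eq_close _ _ Y1 Y2 ltac:(unfold cell in *; rewrite <- C1, <- C2, !Hc; auto)).
  replace ((f t + B) / eps - (f t' + B) / eps) with ((f t - f t') / eps) in Hl by (field; lra).
  unfold Rdiv in Hl. rewrite Rabs_mult, Rabs_inv, (Rabs_right eps) in Hl by lra.
  apply Rmult_lt_compat_r with (r := eps) in Hl; auto.
  rewrite Rmult_assoc, Rinv_l, Rmult_1_r in Hl by lra. lra.
Qed.

Lemma stabilize_family (L : list (nat * (list nat -> R))) B eps : forall M,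
  0 < eps -> strict_incr M ->
  (forall n f t, In (n, f) L -> finite_subset M n t -> Rabs (f t) <= B) ->
  exists M', subsequence M' M /\
    forall n f t t', In (n, f) L -> finite_subset M' n t -> finite_subset M' n t' ->
      Rabs (f t - f t') <= eps.
Proof.
  induction L as [|[n f] L IH]; intros M He HM HB.
  - exists M. split; [apply subsequence_refl; auto|]. intros n f t t' [].
  - destruct (stabilize n f B eps M He HM) as [M1 [H1 H1']].
    { intros t Ht. eapply HB; eauto. left; auto. }
    destruct (IH M1 He (proj1 H1)) as [M2 [H2 H2']].
    { intros n' f' t Hin Ht. eapply HB; [right; eauto|].
      eapply finite_subset_mono; [apply (proj2 H1)|auto]. }
    exists M2. split; [eapply subsequence_trans; eauto|].
    intros n' f' t t' [Heq|Hin] Ht Ht'.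
    + injection Heq as <- <-.
      apply H1'; apply (finite_subset_mono M2); auto; exact (proj2 H2).
    + eapply H2'; eauto.
Qed.

(** ** Plegma families as single finite subsets

    A plegma family s_0, ..., s_{m-1} of k-sets is interleaved into the single
    (m*k)-set s_0(0) < ... < s_{m-1}(0) < s_0(1) < ... < s_{m-1}(k-1); its
    entry at position i*m + j is s_j(i).  This reduces functions of plegma
    families of length m to functions of (m*k)-subsets. *)

Definition weave (k m : nat) (s : nat -> list nat) : list nat :=
  map (fun r => nth (r / m) (s (r mod m)) 0%nat) (seq 0 (m * k)).

Definition unweave (k m : nat) (t : list nat) (j : nat) : list nat :=
  map (fun i => nth (i * m + j) t 0%nat) (seq 0 k).

Lemma nth_map_seq (f : nat -> nat) n r d : (r < n)%nat -> nth r (map f (seq 0 n)) d = f r.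
Proof.
  intros H. rewrite nth_indep with (d' := f 0%nat) by (rewrite length_map, length_seq; auto).
  rewrite map_nth, seq_nth; auto.
Qed.

Lemma list_as_map (l : list nat) k : length l = k -> map (fun i => nth i l 0%nat) (seq 0 k) = l.
Proof.
  intros H. apply nth_ext with (d := 0%nat) (d' := 0%nat).
  - rewrite length_map, length_seq; auto.
  - intros n Hn. rewrite length_map, length_seq in Hn. rewrite nth_map_seq; auto.
Qed.

Lemma sorted_nth_lt t : StronglySorted lt t -> forall r1 r2, (r1 < r2)%nat -> (r2 < length t)%nat ->
  (nth r1 t 0 < nth r2 t 0)%nat.
Proof.
  induction t as [|a t IH]; intros H r1 r2 H12 H2; [simpl in H2; lia|].
  apply StronglySorted_inv in H. destruct H as [H Hf].
  destruct r2 as [|r2]; [lia|]. simpl in H2.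
  destruct r1 as [|r1]; simpl.
  - rewrite Forall_forall in Hf. apply Hf. apply nth_In. lia.
  - apply IH; auto; lia.
Qed.

Lemma sorted_of_nth_lt t : (forall r, (S r < length t)%nat -> (nth r t 0 < nth (S r) t 0)%nat) ->
  StronglySorted lt t.
Proof.
  intros H. apply Sorted_StronglySorted; [intros x y z; apply Nat.lt_trans|].
  induction t as [|a t IH]; constructor.
  - apply IH. intros r Hr. apply (H (S r)). simpl. lia.
  - destruct t as [|b t]; constructor. apply (H 0%nat). simpl. lia.
Qed.

Lemma weave_length k m s : length (weave k m s) = (m * k)%nat.
Proof. unfold weave. rewrite length_map, length_seq. auto. Qed.

Lemma weave_nth k m s i j : (i < k)%nat -> (j < m)%nat ->
  nth (i * m + j) (weave k m s) 0%nat = nth i (s j) 0%nat.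
Proof.
  intros Hi Hj. unfold weave. rewrite nth_map_seq by nia.
  rewrite <- (Nat.div_unique (i * m + j) m i j), <- (Nat.mod_unique (i * m + j) m i j);
    auto; lia.
Qed.

Lemma weave_position k m r : (r < m * k)%nat ->
  exists i j, (i < k)%nat /\ (j < m)%nat /\ r = (i * m + j)%nat.
Proof.
  intros Hr. assert (Hm : m <> 0%nat) by (intro; subst; simpl in Hr; lia).
  exists (r / m)%nat, (r mod m)%nat.
  pose proof (Nat.div_mod r m Hm). pose proof (Nat.mod_upper_bound r m Hm).
  repeat split; auto; nia.
Qed.

Lemma unweave_length k m t j : length (unweave k m t j) = k.
Proof. unfold unweave. rewrite length_map, length_seq. auto. Qed.

Lemma unweave_weave k m s j : length (s j) = k -> (j < m)%nat -> unweave k m (weave k m s) j = s j.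
Proof.
  intros Hl Hj. unfold unweave. rewrite <- (list_as_map (s j) k Hl) at 1.
  apply map_ext_in. intros i Hi. apply in_seq in Hi. apply weave_nth; lia.
Qed.

Lemma unweave_in_Nk M k m t j : finite_subset M (m * k) t -> (j < m)%nat -> in_Nk k (unweave k m t j).
Proof.
  intros [Hl [Hs _]] Hj. split; [apply unweave_length|]. split; [|eauto].
  intros i Hi. unfold unweave. rewrite !nth_map_seq by lia.
  apply sorted_nth_lt; auto; [nia|rewrite Hl; nia].
Qed.

Section Plegma.
Variables (D : nat -> nat) (k m : nat) (s : nat -> list nat).
Hypotheses (HD : strict_incr D) (Hs : plegma D k m s).

Lemma plegma_min_entry i j : (i < k)%nat -> (j < m)%nat -> (nth 0 (s 0%nat) 0 <= nth i (s j) 0)%nat.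
Proof.
  destruct Hs as [H1 [H2 _]]. intros Hi Hj.
  assert (nth 0 (s 0%nat) 0 <= nth i (s 0%nat) 0)%nat.
  { induction i; [lia|].
    destruct (H1 0%nat ltac:(lia)) as [_ [Hinc _]].
    specialize (Hinc i Hi). specialize (IHi ltac:(lia)). lia. }
  assert (nth i (s 0%nat) 0 <= nth i (s j) 0)%nat.
  { induction j; [lia|]. specialize (H2 i j Hi Hj). specialize (IHj ltac:(lia)). lia. }
  lia.
Qed.

Lemma weave_sorted : StronglySorted lt (weave k m s).
Proof.
  destruct Hs as [_ [H2 H3]]. apply sorted_of_nth_lt. intros r Hr. rewrite weave_length in Hr.
  destruct (weave_position k m r ltac:(lia)) as [i [j [Hi [Hj ->]]]].
  destruct (Nat.eq_dec (S j) m) as [Ej|Ej].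
  - (* last member of the family, next index: s_{m-1}(i) < s_0(i+1) *)
    replace (S (i * m + j)) with (S i * m + 0)%nat by nia.
    rewrite !weave_nth by nia. specialize (H3 i ltac:(nia) ltac:(lia)).
    replace (m - 1)%nat with j in H3 by lia. auto.
  - replace (S (i * m + j)) with (i * m + S j)%nat by lia.
    rewrite !weave_nth by lia. apply H2; lia.
Qed.

Lemma weave_finite_subset N p :
  (forall n, (p <= n)%nat -> exists i, D n = N i) ->
  ((0 < m)%nat -> (D p <= nth 0 (s 0%nat) 0)%nat) ->
  finite_subset N (m * k) (weave k m s) /\ forall j, (j < m)%nat -> unweave k m (weave k m s) j = s j.
Proof.
  intros Hr Hmin. destruct Hs as [H1 _].
  split; [split; [apply weave_length|split; [apply weave_sorted|]]|].
  - intros y Hy. apply In_nth with (d := 0%nat) in Hy. destruct Hy as [r [Hr' <-]].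
    rewrite weave_length in Hr'.
    destruct (weave_position k m r Hr') as [i [j [Hi [Hj ->]]]]. rewrite weave_nth by auto.
    destruct (proj2 (proj2 (H1 j Hj)) i Hi) as [n Hn]. rewrite Hn. apply Hr.
    assert (Hle := plegma_min_entry i j Hi Hj). specialize (Hmin ltac:(lia)). rewrite Hn in Hle.
    apply (strict_incr_le_inv D); auto. lia.
  - intros j Hj. apply unweave_weave; auto. apply (H1 j Hj).
Qed.

End Plegma.

(** ** A finite grid of coefficient vectors

    At level p, coefficients range over [-(p+1), p+1], discretized with mesh
    1/(p+1)^2: a grid vector of length m is a list v of m indices below
    [grid_size p], and represents the coefficients [grid_point p v j]. *)

Fixpoint grid_vectors (m W : nat) : list (list nat) :=
  match m with
  | O => [nil]
  | S m' => concat (map (fun i => map (cons i) (grid_vectors m' W)) (seq 0 W))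
  end.

Lemma grid_vectors_complete m W : forall v, length v = m ->
  (forall j, (j < m)%nat -> (nth j v 0 < W)%nat) -> In v (grid_vectors m W).
Proof.
  induction m; intros v Hl Hb.
  - destruct v; [left; auto|discriminate].
  - destruct v as [|i v]; [discriminate|]. simpl in Hl. injection Hl as Hl.
    simpl. apply in_concat. exists (map (cons i) (grid_vectors m W)). split.
    + apply in_map_iff. exists i. split; auto. apply in_seq. specialize (Hb 0%nat). simpl in Hb. lia.
    + apply in_map. apply IHm; auto. intros j Hj. apply (Hb (S j)). lia.
Qed.

Lemma grid_vectors_bounded m W : forall v, In v (grid_vectors m W) ->
  forall j, (j < m)%nat -> (nth j v 0 < W)%nat.
Proof.
  induction m; intros v Hv j Hj; [lia|].
  simpl in Hv. apply in_concat in Hv. destruct Hv as [l [Hl Hv]].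
  apply in_map_iff in Hl. destruct Hl as [i [<- Hi]]. apply in_seq in Hi.
  apply in_map_iff in Hv. destruct Hv as [v' [<- Hv']].
  destruct j; simpl; [lia|]. apply IHm; auto. lia.
Qed.

Definition grid_size (p : nat) : nat := (2 * S p * (S p * S p) + 1)%nat.

Definition grid_point (p : nat) (v : list nat) (j : nat) : R :=
  - INR (S p) + INR (nth j v 0%nat) / INR (S p * S p).

(** The grid index nearest below a real y in [-(p+1), p+1]. *)
Definition grid_index (p : nat) (y : R) : nat :=
  (Z.to_nat (up ((y + INR (S p)) * INR (S p * S p))) - 1)%nat.

Lemma INR_S_pos p : 0 < INR (S p).
Proof. apply lt_0_INR. lia. Qed.

Lemma grid_point_bound p v m : In v (grid_vectors m (grid_size p)) ->
  forall j, (j < m)%nat -> Rabs (grid_point p v j) <= INR (S p).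
Proof.
  intros Hv j Hj. assert (Hn := grid_vectors_bounded m _ v Hv j Hj).
  assert (Hle : (nth j v 0 <= 2 * S p * (S p * S p))%nat) by (unfold grid_size in Hn; lia).
  apply le_INR in Hle. rewrite !mult_INR in Hle. unfold grid_point. rewrite mult_INR.
  set (P := INR (S p)) in *. set (y := INR (nth j v 0%nat)) in *.
  assert (HP : 0 < P) by apply INR_S_pos. assert (Hy : 0 <= y) by apply pos_INR.
  assert (HPP : 0 < P * P) by nra.
  assert (0 <= y / (P * P) <= 2 * P).
  { split; [apply Rmult_le_pos; auto; left; apply Rinv_0_lt_compat; auto|].
    apply Rmult_le_reg_r with (P * P); auto. unfold Rdiv.
    rewrite Rmult_assoc, Rinv_l by lra. simpl in Hle. lra. }
  apply Rabs_le. lra.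
Qed.

Lemma grid_index_spec p y : Rabs y <= INR (S p) ->
  (grid_index p y < grid_size p)%nat /\
  Rabs (y - (- INR (S p) + INR (grid_index p y) / INR (S p * S p))) <= 1 / INR (S p * S p).
Proof.
  intros Hy. set (L := INR (S p * S p)). set (P := INR (S p)).
  assert (HP : 0 < P) by apply INR_S_pos.
  assert (HL : L = P * P) by (unfold L, P; rewrite mult_INR; auto).
  assert (HL0 : 0 < L) by nra.
  set (z := (y + P) * L).
  assert (Hy' : - P <= y <= P).
  { pose proof (Rle_abs y). pose proof (Rle_abs (- y)). rewrite Rabs_Ropp in *. unfold P. lra. }
  assert (Hz : 0 <= z <= 2 * P * L) by (unfold z; split; nra).
  destruct (archimed z) as [A1 A2].
  assert (Hup : (1 <= up z)%Z) by (cut (0 < up z)%Z; [lia|apply lt_IZR; simpl; lra]).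
  assert (Hr : INR (grid_index p y) = IZR (up z) - 1).
  { unfold grid_index. fold P. fold L. fold z.
    rewrite minus_INR, INR_IZR_INZ, Z2Nat.id by lia. reflexivity. }
  split.
  - apply INR_lt. rewrite Hr. unfold grid_size. rewrite plus_INR, !mult_INR. fold P.
    simpl (INR 1). simpl (INR 2). rewrite <- HL. lra.
  - replace (y - (- P + INR (grid_index p y) / L)) with ((z - INR (grid_index p y)) / L)
      by (unfold z; field; lra).
    rewrite Hr. unfold Rdiv. rewrite Rabs_mult, (Rabs_right (/ L)) by (left; apply Rinv_0_lt_compat; auto).
    apply Rmult_le_compat_r; [left; apply Rinv_0_lt_compat; auto|].
    apply Rabs_le. lra.
Qed.

Lemma Rabs_triangle3 a b c d e1 e2 e3 :
  Rabs (a - b) <= e1 -> Rabs (b - c) <= e2 -> Rabs (c - d) <= e3 -> Rabs (a - d) <= e1 + e2 + e3.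
Proof.
  intros H1 H2 H3.
  replace (a - d) with ((a - b) + (b - c) + (c - d)) by ring.
  eapply Rle_trans; [apply Rabs_triang|]. pose proof (Rabs_triang (a - b) (b - c)). lra.
Qed.

Section Level.
Variables (X : Banach) (x : list nat -> X) (k : nat) (C : R).
Hypothesis HC : forall s, in_Nk k s -> vnorm X (x s) <= C.
Hypothesis HC0 : 0 <= C.

Definition grid_comb_norm (p m : nat) (v : list nat) (t : list nat) : R :=
  comb_norm X x m (grid_point p v) (unweave k m t).

Definition level_tasks (p : nat) : list (nat * (list nat -> R)) :=
  flat_map (fun m => map (fun v => ((m * k)%nat, grid_comb_norm p m v))
                         (grid_vectors m (grid_size p)))
    (seq 0 (S (S p))).

Definition homogeneous_at_level (p : nat) (M : nat -> nat) : Prop :=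
  forall m v t t', (m <= S p)%nat -> In v (grid_vectors m (grid_size p)) ->
    finite_subset M (m * k) t -> finite_subset M (m * k) t' ->
    Rabs (grid_comb_norm p m v t - grid_comb_norm p m v t') <= 1 / INR (S p).

(** Grid combinations are bounded by (p+1)^2 C, so finitely many Ramsey
    stabilizations give a homogeneous subsequence. *)
Lemma homogeneous_subsequence p M :
  strict_incr M -> exists M', subsequence M' M /\ homogeneous_at_level p M'.
Proof.
  intros HM.
  destruct (stabilize_family (level_tasks p) (INR (S p) * (INR (S p) * C)) (1 / INR (S p)) M)
    as [M' [H1 H2]]; auto.
  - apply Rdiv_lt_0_compat; [lra|apply INR_S_pos].
  - intros n f t Hin Ht. unfold level_tasks in Hin. apply in_flat_map in Hin.
    destruct Hin as [m [Hm Hin]]. apply in_seq in Hm. apply in_map_iff in Hin.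
    destruct Hin as [v [Heq Hv]]. injection Heq as <- <-.
    unfold grid_comb_norm, comb_norm. rewrite Rabs_right by (apply Rle_ge, vnorm_nonneg).
    eapply Rle_trans; [apply vsum_norm_le|].
    + intros j Hj. rewrite vnorm_scal.
      apply Rmult_le_compat; auto using Rabs_pos, vnorm_nonneg.
      * apply (grid_point_bound p v m Hv j Hj).
      * apply HC. eapply unweave_in_Nk; eauto.
    + apply Rmult_le_compat_r; [apply Rmult_le_pos; auto; left; apply INR_S_pos|].
      apply le_INR. lia.
  - exists M'. split; auto. intros m v t t' Hm Hv Ht Ht'.
    apply (H2 (m * k)%nat); auto. unfold level_tasks. apply in_flat_map. exists m. split.
    + apply in_seq. lia.
    + apply in_map_iff. exists v. auto.
Qed.

(** Homogeneity at level p controls all coefficient vectors in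
    [-(p+1), p+1]^m, not only grid points: rounding each coefficient to the
    grid changes the norm by at most m C/(p+1)^2 <= C/(p+1). *)
Lemma homogeneous_all_coefficients M p m a t t' :
  homogeneous_at_level p M -> (m <= S p)%nat -> (forall j, (j < m)%nat -> Rabs (a j) <= INR (S p)) ->
  finite_subset M (m * k) t -> finite_subset M (m * k) t' ->
  Rabs (comb_norm X x m a (unweave k m t) - comb_norm X x m a (unweave k m t'))
    <= (2 * C + 1) / INR (S p).
Proof.
  intros Hh Hm Ha Ht Ht'.
  pose (v := map (fun j => grid_index p (a j)) (seq 0 m)).
  assert (Hvj : forall j, (j < m)%nat -> nth j v 0%nat = grid_index p (a j))
    by (intros j Hj; apply nth_map_seq; auto).
  assert (Hv : In v (grid_vectors m (grid_size p))).
  { apply grid_vectors_complete; [unfold v; rewrite length_map, length_seq; auto|].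
    intros j Hj. rewrite Hvj by auto. apply grid_index_spec. auto. }
  set (P := INR (S p)). assert (HP : 0 < P) by apply INR_S_pos.
  assert (Hg : forall j, (j < m)%nat -> Rabs (a j - grid_point p v j) <= 1 / (P * P)).
  { intros j Hj. unfold grid_point. rewrite Hvj by auto.
    unfold P. rewrite <- mult_INR. apply grid_index_spec. auto. }
  assert (Hround : forall u, finite_subset M (m * k) u ->
      Rabs (comb_norm X x m a (unweave k m u) - grid_comb_norm p m v u) <= C / P).
  { intros u Hu. eapply Rle_trans.
    - apply comb_norm_lipschitz; eauto. intros j Hj. apply HC. eapply unweave_in_Nk; eauto.
    - apply Rle_trans with (P * (1 / (P * P) * C)); [|right; field; lra].
      assert (0 <= 1 / (P * P)) by (apply Rmult_le_pos; [lra|left; apply Rinv_0_lt_compat; nra]).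
      apply Rmult_le_compat_r; [apply Rmult_le_pos; auto|].
      apply le_INR. auto. }
  assert (H1 := Hround t Ht). assert (H3 := Hround t' Ht'). rewrite Rabs_minus_sym in H3.
  assert (H2 := Hh m v t t' Hm Hv Ht Ht').
  replace ((2 * C + 1) / P) with (C / P + 1 / P + C / P) by (field; lra).
  eapply Rabs_triangle3; eauto.
Qed.

Lemma homogeneous_plegma M D p m a s s' :
  homogeneous_at_level p M -> strict_incr D -> (forall n, (p <= n)%nat -> exists i, D n = M i) ->
  (m <= S p)%nat -> (forall j, (j < m)%nat -> Rabs (a j) <= INR (S p)) ->
  plegma D k m s -> plegma D k m s' ->
  ((0 < m)%nat -> (D p <= nth 0 (s 0%nat) 0)%nat) ->
  ((0 < m)%nat -> (D p <= nth 0 (s' 0%nat) 0)%nat) ->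
  Rabs (comb_norm X x m a s - comb_norm X x m a s') <= (2 * C + 1) / INR (S p).
Proof.
  intros Hh HD Hr Hm Ha Hs Hs' Hmin Hmin'.
  destruct (weave_finite_subset D k m s HD Hs M p Hr Hmin) as [E1 E2].
  destruct (weave_finite_subset D k m s' HD Hs' M p Hr Hmin') as [E1' E2'].
  rewrite (comb_norm_ext X x m a a s (unweave k m (weave k m s)))
    by (intros j Hj; split; [reflexivity|symmetry; auto]).
  rewrite (comb_norm_ext X x m a a s' (unweave k m (weave k m s')))
    by (intros j Hj; split; [reflexivity|symmetry; auto]).
  apply (homogeneous_all_coefficients M); auto.
Qed.

End Level.

(** ** Diagonalization *)

(** If every sequence has, for each level p, a subsequence with property
    [P p], then some sequence D has, for every p, its tail from the p-th term
    inside a sequence with property [P p] (D(p) is the p-th term of the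
    (p+1)-st refinement). *)
Lemma diagonal_sequence (P : nat -> (nat -> nat) -> Prop) :
  (forall p M, strict_incr M -> exists M', subsequence M' M /\ P p M') ->
  exists D, strict_incr D /\
    forall p, exists Mp, P p Mp /\ forall n, (p <= n)%nat -> exists i, D n = Mp i.
Proof.
  intros Hstep.
  destruct (choice (fun (pM : nat * (nat -> nat)) M' =>
      strict_incr (snd pM) -> subsequence M' (snd pM) /\ P (fst pM) M')) as [G HG].
  { intros [p M]. destruct (classic (strict_incr M)) as [HM|HM].
    - destruct (Hstep p M HM) as [M' HM']. exists M'. auto.
    - exists M. intros; contradiction. }
  pose (Nl := nat_rect (fun _ => nat -> nat) (fun n => n) (fun p Np => G (p, Np))).
  assert (Nstep : forall p, strict_incr (Nl p) /\ subsequence (Nl (S p)) (Nl p) /\ P p (Nl (S p))).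
  { intros p. assert (Hinc : strict_incr (Nl p)).
    { induction p; [intros n; simpl; lia|]. apply (HG (p, Nl p) IHp). }
    split; [exact Hinc|]. apply (HG (p, Nl p) Hinc). }
  assert (Nrange : forall p q, (p <= q)%nat -> forall n, exists i, Nl q n = Nl p i).
  { intros p q Hpq. induction Hpq as [|q Hpq IH]; [eauto|].
    intros n. destruct (proj2 (proj1 (proj2 (Nstep q))) n) as [i Hi].
    destruct (IH i) as [j Hj]. exists j. congruence. }
  exists (fun p => Nl (S p) p). split.
  - intros p. destruct (Nstep (S p)) as [_ [Hsub _]].
    assert (H1 := subsequence_ge (Nl (S p)) (proj1 (Nstep (S p))) _ (S p) Hsub).
    assert (H2 := proj1 (Nstep (S p)) p). lia.
  - intros p. exists (Nl (S p)). split; [apply Nstep|].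
    intros n Hpn. apply Nrange. lia.
Qed.

Definition uniformly_stable (X : Banach) (x : list nat -> X) (k : nat) (D : nat -> nat) (K : R) : Prop :=
  forall p m a s s', (m <= S p)%nat -> (forall j, (j < m)%nat -> Rabs (a j) <= INR (S p)) ->
    plegma D k m s -> plegma D k m s' ->
    ((0 < m)%nat -> (D p <= nth 0 (s 0%nat) 0)%nat) ->
    ((0 < m)%nat -> (D p <= nth 0 (s' 0%nat) 0)%nat) ->
    Rabs (comb_norm X x m a s - comb_norm X x m a s') <= K / INR (S p).

Lemma stable_sequence_exists (X : Banach) (x : list nat -> X) (k : nat) (C : R) :
  (forall s, in_Nk k s -> vnorm X (x s) <= C) -> 0 <= C ->
  exists D, strict_incr D /\ uniformly_stable X x k D (2 * C + 1).
Proof.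
  intros HC HC0.
  destruct (diagonal_sequence (homogeneous_at_level X x k)) as [D [HD HDp]].
  { intros p M HM. apply (homogeneous_subsequence X x k C); auto. }
  exists D. split; [exact HD|]. intros p m a s s' Hm Ha Hs Hs' Hmin Hmin'.
  destruct (HDp p) as [Mp [Hh Hr]].
  eapply homogeneous_plegma; eauto.
Qed.

Lemma Un_cv_const c : Un_cv (fun _ => c) c.
Proof. intros eps He. exists 0%nat. intros. rewrite R_dist_eq. auto. Qed.

Lemma Un_cv_dist_le (u : nat -> R) L c e : Un_cv u L ->
  (exists Q, forall q, (Q <= q)%nat -> Rabs (c - u q) <= e) -> Rabs (c - L) <= e.
Proof.
  intros Hu [Q HQ]. destruct (Rle_or_lt (Rabs (c - L)) e) as [H|H]; auto.
  exfalso. destruct (Hu (Rabs (c - L) - e)) as [N HN]; [lra|].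
  specialize (HN (Nat.max N Q) ltac:(lia)). specialize (HQ (Nat.max N Q) ltac:(lia)).
  unfold R_dist in HN.
  assert (Rabs (c - L) <= Rabs (c - u (Nat.max N Q)) + Rabs (u (Nat.max N Q) - L)).
  { replace (c - L) with ((c - u (Nat.max N Q)) + (u (Nat.max N Q) - L)) by ring. apply Rabs_triang. }
  lra.
Qed.

Lemma div_INR_S_small K eps : 0 < K -> 0 < eps -> exists N, forall p, (N <= p)%nat -> K / INR (S p) < eps.
Proof.
  intros HK He. destruct (INR_unbounded (K / eps)) as [N HN]. exists N. intros p Hp.
  assert (H1 : INR N <= INR (S p)) by (apply le_INR; lia).
  assert (H2 : 0 < K / eps) by (apply Rdiv_lt_0_compat; auto).
  assert (H3 : 0 < INR (S p)) by apply INR_S_pos.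
  apply Rmult_lt_reg_r with (INR (S p)); auto. unfold Rdiv.
  rewrite Rmult_assoc, Rinv_l, Rmult_1_r by lra.
  apply Rmult_lt_reg_l with (/ eps); [apply Rinv_0_lt_compat; auto|].
  replace (/ eps * K) with (K / eps) by (unfold Rdiv; ring).
  replace (/ eps * (eps * INR (S p))) with (INR (S p)) by (field; lra). lra.
Qed.

Lemma finite_abs_bound m (f : nat -> R) : exists B, 0 <= B /\ forall j, (j < m)%nat -> Rabs (f j) <= B.
Proof.
  induction m as [|m [B [HB H]]]; [exists 0; split; [lra|intros; lia]|].
  exists (Rmax B (Rabs (f m))). split; [eapply Rle_trans; [apply HB|apply Rmax_l]|].
  intros j Hj. destruct (Nat.eq_dec j m); [subst; apply Rmax_r|].
  eapply Rle_trans; [apply H; lia|apply Rmax_l].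
Qed.

(** ** The spreading model of a uniformly stable sequence *)

Section SpreadingModel.
Variables (X : Banach) (x : list nat -> X) (k : nat) (D : nat -> nat) (K : R).
Hypotheses (HD : strict_incr D) (HK : 0 < K) (Hstab : uniformly_stable X x k D K).

Definition canonical_family (q j : nat) : list nat :=
  map (fun i => D (q + i * q + j)%nat) (seq 0 k).

Lemma canonical_family_nth q j i : (i < k)%nat -> nth i (canonical_family q j) 0%nat = D (q + i * q + j)%nat.
Proof. intros Hi. apply (nth_map_seq (fun i => D (q + i * q + j)%nat)). auto. Qed.

Lemma canonical_family_plegma q m : (1 <= q)%nat -> (m <= q)%nat -> plegma D k m (canonical_family q).
Proof.
  intros Hq Hm. split; [|split].
  - intros j Hj. split; [|split].
    + unfold canonical_family. rewrite length_map, length_seq. auto.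
    + intros i Hi. rewrite !canonical_family_nth by lia. apply strict_incr_lt; auto. nia.
    + intros i Hi. rewrite canonical_family_nth by lia. eauto.
  - intros i j Hi Hj. rewrite !canonical_family_nth by lia. apply strict_incr_lt; auto. lia.
  - intros i Hi Hm0. rewrite !canonical_family_nth by lia. apply strict_incr_lt; auto. nia.
Qed.

Lemma canonical_family_start q : (0 < k)%nat -> nth 0 (canonical_family q 0%nat) 0%nat = D q.
Proof. intros Hk. rewrite canonical_family_nth by lia. f_equal. lia. Qed.

Lemma close_to_canonical p m a s q : (0 < k)%nat -> (m <= S p)%nat ->
  (forall j, (j < m)%nat -> Rabs (a j) <= INR (S p)) ->
  plegma D k m s -> ((0 < m)%nat -> (D p <= nth 0 (s 0%nat) 0)%nat) -> (S p <= q)%nat -> (m <= q)%nat ->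
  Rabs (comb_norm X x m a s - comb_norm X x m a (canonical_family q)) <= K / INR (S p).
Proof.
  intros Hk Hm Ha Hs Hmin Hq Hmq. apply Hstab; auto.
  - apply canonical_family_plegma; lia.
  - intros _. rewrite canonical_family_start by auto. apply strict_incr_le; auto. lia.
Qed.

Definition canonical_norm (f : nat -> R) (q : nat) : R := comb_norm X x q f (canonical_family q).

Lemma canonical_norm_cauchy f : (0 < k)%nat -> c00 f -> Cauchy_crit (canonical_norm f).
Proof.
  intros Hk [m0 Hf] eps He. destruct (finite_abs_bound m0 f) as [B [HB0 HB]].
  destruct (div_INR_S_small K eps HK He) as [N1 HN1].
  destruct (INR_unbounded B) as [N2 HN2].
  set (p := Nat.max N1 (Nat.max N2 m0)). exists (S p). intros n q Hn Hq.
  unfold R_dist, canonical_norm.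
  rewrite (comb_norm_tail X x m0 n), (comb_norm_tail X x m0 q) by (auto; lia).
  eapply Rle_lt_trans; [apply (close_to_canonical p); auto; try lia|apply HN1; lia].
  - intros j Hj. eapply Rle_trans; [apply HB; auto|].
    assert (INR N2 <= INR (S p)) by (apply le_INR; lia). lra.
  - apply canonical_family_plegma; lia.
  - intros _. rewrite canonical_family_start by auto. apply strict_incr_le; auto. lia.
Qed.

Definition limit_norm (f : nat -> R) : R :=
  epsilon (inhabits 0) (fun l => Un_cv (canonical_norm f) l).

Lemma limit_norm_spec f : (0 < k)%nat -> c00 f -> Un_cv (canonical_norm f) (limit_norm f).
Proof.
  intros Hk Hf. unfold limit_norm. apply epsilon_spec.
  destruct (R_complete _ (canonical_norm_cauchy f Hk Hf)) as [l Hl]. eauto.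
Qed.

Lemma c00_scal a f : c00 f -> c00 (fun n => a * f n).
Proof. intros [m0 Hm0]. exists m0. intros n Hn. rewrite Hm0 by auto. ring. Qed.

Lemma c00_add f g : c00 f -> c00 g -> c00 (fun n => f n + g n).
Proof.
  intros [m0 Hm0] [m1 Hm1]. exists (Nat.max m0 m1). intros n Hn. rewrite Hm0, Hm1 by lia. ring.
Qed.

Lemma limit_norm_seminorm : (0 < k)%nat -> seminorm_c00 limit_norm.
Proof.
  intros Hk. split; [|split].
  - intros f Hf. apply Rle_cv_lim with (fun _ => 0) (canonical_norm f);
      [intros; apply vnorm_nonneg|apply Un_cv_const|apply limit_norm_spec; auto].
  - intros a f Hf. apply (UL_sequence (canonical_norm (fun n => a * f n))).
    + apply limit_norm_spec, c00_scal; auto.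
    + replace (canonical_norm (fun n => a * f n)) with (fun q => Rabs a * canonical_norm f q)
        by (apply functional_extensionality; intros q; symmetry; apply comb_norm_scal).
      apply CV_mult; [apply Un_cv_const|apply limit_norm_spec; auto].
  - intros f g Hf Hg.
    apply Rle_cv_lim with (canonical_norm (fun n => f n + g n))
                          (fun q => canonical_norm f q + canonical_norm g q).
    + intros q. apply comb_norm_subadd.
    + apply limit_norm_spec, c00_add; auto.
    + apply CV_plus; apply limit_norm_spec; auto.
Qed.

Lemma c00_comb_c00 m a : c00 (c00_comb m a).
Proof.
  exists m. intros n Hn. unfold c00_comb. destruct (Nat.ltb_spec n m); auto. lia.
Qed.

Lemma c00_comb_eq m a j : (j < m)%nat -> c00_comb m a j = a j.
Proof. intros Hj. unfold c00_comb. destruct (Nat.ltb_spec j m); auto. lia. Qed.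

(** The spreading-model inequality with delta_l = K/l: a combination with
    coefficients in [-1, 1] of a plegma family of length m <= l starting
    beyond D(l-1) is within K/l of every canonical norm of length >= l, hence
    of their limit. *)
Lemma limit_norm_generates : (0 < k)%nat -> generates_spreading_model X k x D limit_norm.
Proof.
  intros Hk. exists (fun n => K / INR (S (n - 1))). split; [|split].
  - intros n. apply Rdiv_lt_0_compat; auto. apply INR_S_pos.
  - intros eps He. destruct (div_INR_S_small K eps HK He) as [N1 HN1]. exists (S N1).
    intros n Hn. unfold R_dist. rewrite Rminus_0_r, Rabs_right; [apply HN1; lia|].
    apply Rle_ge. left. apply Rdiv_lt_0_compat; auto. apply INR_S_pos.
  - intros l m s a Hl Hml Hpl Hmin Ha.
    apply Un_cv_dist_le with (canonical_norm (c00_comb m a)); [apply limit_norm_spec, c00_comb_c00; auto|].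
    exists (Nat.max l m). intros q Hq. unfold canonical_norm.
    rewrite (comb_norm_tail X x m q) by (try lia; intros j Hj; unfold c00_comb;
      destruct (Nat.ltb_spec j m); auto; lia).
    change (vnorm X _) with (comb_norm X x m a s).
    rewrite (comb_norm_ext X x m a (c00_comb m a) s s)
      by (intros j Hj; rewrite c00_comb_eq; auto).
    apply (close_to_canonical (l - 1)); auto; try lia.
    intros j Hj. rewrite c00_comb_eq by auto. destruct (Ha j Hj).
    assert (1 <= INR (S (l - 1))) by (apply (le_INR 1); lia).
    apply Rabs_le. lra.
Qed.

End SpreadingModel.

Theorem mainTheorem4 (X : Banach) (k : nat) (Hk : (1 <= k)%nat)
    (x : list nat -> X)
    (Hbdd : exists C : R, forall s, in_Nk k s -> vnorm X (x s) <= C) :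
  exists (M : nat -> nat) (N : (nat -> R) -> R),
    strict_incr M /\ seminorm_c00 N /\ generates_spreading_model X k x M N.
Proof.
  destruct Hbdd as [C HC].
  (* Use max(C, 0), so that the stability constant 2 max(C, 0) + 1 is positive. *)
  assert (HC' : forall s, in_Nk k s -> vnorm X (x s) <= Rmax C 0)
    by (intros s Hs; eapply Rle_trans; [apply HC; auto|apply Rmax_l]).
  destruct (stable_sequence_exists X x k (Rmax C 0) HC' (Rmax_r C 0)) as [D [HD Hstab]].
  assert (HK : 0 < 2 * Rmax C 0 + 1) by (pose proof (Rmax_r C 0); lra).
  exists D, (limit_norm X x k D). split; [exact HD|]. split.
  - apply limit_norm_seminorm with (2 * Rmax C 0 + 1); auto.
  - apply limit_norm_generates with (2 * Rmax C 0 + 1); auto.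
Qed.
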